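(* Let $F$ and $G$ be topological groups with $F$ Hausdorff, and let $\mathcal R(F,G)$ be the space of continuous homomorphisms $F\to G$ with the compact-open topology. Then the maps $E:\mathcal R(F,G)\to\mathrm{Map}^\bullet(EF,EG)$, $\phi\mapsto E\phi$, and $B:\mathcal R(F,G)\to\mathrm{Map}^\bullet(BF,BG)$, $\phi\mapsto B\phi$, are continuous, where the target spaces of pointed continuous maps carry the compact-open topology.
   Context: For a topological group $P$, Milnor's $EP$ consists of sequences $(t_jp_j)_{j\in\mathbb N}$ with $t_j\in[0,1]$ (finitely many nonzero, summing to 1), $p_j\in P$ (with $p_j$ irrelevant when $t_j=0$); it carries the coarsest topology making continuous the maps $\tau_i((t_jp_j))=t_i$ and $\gamma_i:\tau_i^{-1}(]0,1])\to P$, $\gamma_i((t_jp_j))=p_i$. $P$ acts on the right by $(t_jp_j)\cdot p=(t_jp_jp)$, $BP=EP/P$; base point of $EP$ is $(1e,0,0,\dots)$ and of $BP$ its image. For $\phi:F\to G$, $E\phi((t_jf_j))=(t_j\phi(f_j))$ and $B\phi$ is the induced map $BF\to BG$. *)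

From HB Require Import structures.
From mathcomp Require Import all_boot all_order all_algebra.
From mathcomp Require Import all_classical all_reals all_analysis.
From mathcomp Require Import Rstruct Rstruct_topology.


Set Implicit Arguments.
Unset Strict Implicit.
Unset Printing Implicit Defensive.

Import Order.TTheory GRing.Theory Num.Theory.
Local Open Scope classical_set_scope.
Local Open Scope ring_scope.

Record TopGroup := {
  tg_car :> topologicalType;
  tg_mul : tg_car -> tg_car -> tg_car;
  tg_inv : tg_car -> tg_car;
  tg_one : tg_car;
  tg_mulA : forall x y z, tg_mul x (tg_mul y z) = tg_mul (tg_mul x y) z;
  tg_mul1 : forall x, tg_mul tg_one x = x;
  tg_mulV : forall x, tg_mul (tg_inv x) x = tg_one;
  tg_mul_cont : continuous (fun xy : tg_car * tg_car => tg_mul xy.1 xy.2);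
  tg_inv_cont : continuous tg_inv }.

Definition is_hom (F G : TopGroup) (phi : F -> G) :=
  forall x y, phi (tg_mul x y) = tg_mul (phi x) (phi y).

(** A point (t_j p_j)_j is represented by the pair of sequences (t, p), with
   the convention p_j = e whenever t_j = 0 (p_j is irrelevant there), which
   gives a canonical representative of each point. *)
Definition EPcond (P : TopGroup) (x : (nat -> Rdefinitions.R) * (nat -> P)) : Prop :=
  [/\ forall j, 0 <= x.1 j <= 1,
      exists n : nat, (forall j : nat, (n <= j)%N -> x.1 j = 0) /\ \sum_(j < n) x.1 j = 1
    & forall j, x.1 j = 0 -> x.2 j = tg_one P].

Definition EP (P : TopGroup) := {x : (nat -> Rdefinitions.R) * (nat -> P) | EPcond x}.

HB.instance Definition _ (P : TopGroup) := gen_eqMixin (EP P).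
HB.instance Definition _ (P : TopGroup) := gen_choiceMixin (EP P).

Definition tau (P : TopGroup) (i : nat) (x : EP P) : Rdefinitions.R := (sval x).1 i.
Definition gam (P : TopGroup) (i : nat) (x : EP P) : P := (sval x).2 i.

(** Subbase of the topology of EP: preimages tau_i^{-1}(U), U open, and
    gamma_i^{-1}(V) = {x | tau_i x > 0 /\ p_i in V}, V open (gamma_i is
    defined on the open set tau_i^{-1}(]0,1])). *)
Definition EP_subbase (P : TopGroup) : set (set (EP P)) :=
  [set S | (exists i (U : set Rdefinitions.R), open U /\ S = tau i @^-1` U) \/
           (exists i (V : set P), open V /\
              S = [set x | 0 < tau i x /\ V (gam i x)])].

HB.instance Definition _ (P : TopGroup) :=
  isPointed.Build (set (EP P)) set0.

HB.instance Definition _ (P : TopGroup) :=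
  @isSubBaseTopological.Build (EP P) (set (EP P)) (@EP_subbase P) id.

Lemma EPbase_cond (P : TopGroup) :
  EPcond ((fun j => if j == 0%N then 1 else 0), (fun _ => tg_one P)).
Proof.
split => //=.
- by move=> j; case: (j == 0%N); rewrite ?lexx ?ler01.
- by exists 1%N; split; [by case | rewrite big_ord1].
Qed.

Definition EPbase (P : TopGroup) : EP P := exist _ _ (EPbase_cond P).

(** * BP = EP / P: points are the orbits of the right P-action
      (t_j p_j) . g = (t_j (p_j g)), with the quotient topology. *)
Definition orbit (P : TopGroup) (x : EP P) : set (EP P) :=
  [set y | exists g : P, forall j, tau j y = tau j x /\
                         (tau j x <> 0 -> gam j y = tg_mul (gam j x) g)].

Definition BP (P : TopGroup) := {S : set (EP P) | exists x, S = orbit x}.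

HB.instance Definition _ (P : TopGroup) := gen_eqMixin (BP P).
HB.instance Definition _ (P : TopGroup) := gen_choiceMixin (BP P).

Definition BPproj (P : TopGroup) (x : EP P) : BP P :=
  exist _ (orbit x) (ex_intro _ x erefl).

Definition BP_open (P : TopGroup) : set (set (BP P)) :=
  [set U : set (BP P) | open (@BPproj P @^-1` U)].

Lemma BP_openT (P : TopGroup) : @BP_open P setT.
Proof. by rewrite /BP_open /= preimage_setT; exact: openT. Qed.

Lemma BP_openI (P : TopGroup) : setI_closed (@BP_open P).
Proof. by move=> A B oA oB; rewrite /BP_open /= preimage_setI; exact: openI. Qed.

Lemma BP_open_bigU (P : TopGroup) (I : Type) (f : I -> set (BP P)) :
  (forall i, @BP_open P (f i)) -> @BP_open P (\bigcup_i f i).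
Proof.
by move=> H; rewrite /BP_open /= preimage_bigcup; apply: bigcup_open => i _; exact: H.
Qed.

HB.instance Definition _ (P : TopGroup) :=
  @isOpenTopological.Build (BP P) (@BP_open P) (BP_openT P) (@BP_openI P)
    (@BP_open_bigU P).

Definition BPbase (P : TopGroup) : BP P := BPproj (EPbase P).

Lemma Emap_cond (F G : TopGroup) (phi : F -> G) (x : EP F) :
  EPcond (fun j => tau j x, fun j => if tau j x == 0 then tg_one G else phi (gam j x)).
Proof.
case: x => [[t p] [H1 H2 H3]]; split => //= j.
by rewrite /tau /= => ->; rewrite eqxx.
Qed.

Definition Emap (F G : TopGroup) (phi : F -> G) (x : EP F) : EP G :=
  exist _ _ (Emap_cond phi x).

Definition BPrep (P : TopGroup) (S : BP P) : EP P := projT1 (cid (svalP S)).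

(** B phi: the induced map BF -> BG, [x] |-> [E phi x]
    (independent of the representative when phi is a homomorphism) *)
Definition Bmap (F G : TopGroup) (phi : F -> G) (S : BP F) : BP G :=
  BPproj (Emap phi (BPrep S)).

Definition contHom (F G : TopGroup) : set {compact-open, F -> G} :=
  [set phi | continuous (phi : F -> G) /\ is_hom phi].

Definition pointed_cont_map (X Y : topologicalType) (x0 : X) (y0 : Y) :
  set {compact-open, X -> Y} :=
  [set f | continuous (f : X -> Y) /\ f x0 = y0].

From Pilot Require Import Defs.
From HB Require Import structures.
From mathcomp Require Import all_boot all_order all_algebra.
From mathcomp Require Import all_classical all_reals all_analysis.
From mathcomp Require Import Rstruct Rstruct_topology.
From mathcomp Require Import finmap.

(* E phi and B phi are continuous because the topology of EP is initial for the
   coordinates tau_i and gamma_i, and E phi only applies phi to the gamma_i.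
   For the continuity of phi |-> E phi in the compact-open topology, fix a
   compact K and an open O containing E phi (K).  By compactness of K it is
   enough to control, near each x in K, a subbasic condition
   gamma_i (E psi x') = psi (gamma_i x') in V.  Near x we may keep
   tau_i >= tau_i x / 2, where gamma_i is continuous, so gamma_i sends these
   points of K into a compact subset C of the Hausdorff group F; since C is
   regular, evaluation (c, psi) |-> psi c is continuous at (gamma_i x, phi) on
   C x R(F, G).  For B, normalising the i-th group coordinate to the unit is a
   continuous section of EP -> BP over tau_i > 0, so compact subsets of BP are
   locally images of compact subsets of EP, and B psi o proj = proj o E psi
   reduces everything to E. *)

Set Implicit Arguments.
Unset Strict Implicit.
Unset Printing Implicit Defensive.
Import Order.TTheory GRing.Theory Num.Theory.
Local Open Scope classical_set_scope.
Local Open Scope ring_scope.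

Section TopGroupTheory.
Context {P : TopGroup}.
Local Notation mul := (@tg_mul P).
Local Notation inv := (@tg_inv P).
Local Notation one := (@tg_one P).

Lemma tg_mulgV (x : P) : mul x (inv x) = one.
Proof.
(* x * x^-1 is idempotent, and a group has no idempotent but the unit. *)
have idem : mul (mul x (inv x)) (mul x (inv x)) = mul x (inv x).
  by rewrite -tg_mulA (tg_mulA (inv x)) tg_mulV tg_mul1.
by rewrite -[LHS]tg_mul1 -(tg_mulV (mul x (inv x))) -tg_mulA idem.
Qed.

Lemma tg_mulg1 (x : P) : mul x one = x.
Proof. by rewrite -(tg_mulV x) tg_mulA tg_mulgV tg_mul1. Qed.

Lemma tg_mulgK (x y : P) : mul (mul y x) (inv x) = y.
Proof. by rewrite -tg_mulA tg_mulgV tg_mulg1. Qed.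

Lemma tg_mulIg (x y z : P) : mul y x = mul z x -> y = z.
Proof. by move=> /(congr1 (mul^~ (inv x))); rewrite !tg_mulgK. Qed.

Lemma tg_invgM (x y : P) : inv (mul x y) = mul (inv y) (inv x).
Proof.
apply: (@tg_mulIg (mul x y)); rewrite tg_mulV -tg_mulA (tg_mulA (inv x)).
by rewrite tg_mulV tg_mul1 tg_mulV.
Qed.

End TopGroupTheory.

Lemma hom1 (F G : TopGroup) (phi : F -> G) : is_hom phi -> phi (tg_one F) = tg_one G.
Proof. by move=> hphi; apply: (@tg_mulIg _ (phi (tg_one F))); rewrite -hphi !tg_mul1. Qed.

Section EPTheory.
Context {P : TopGroup}.

Lemma EP_ext (x y : EP P) :
  (forall j, tau j x = tau j y) -> (forall j, gam j x = gam j y) -> x = y.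
Proof.
case: x y => [[t p] hx] [[t' p'] hy] /= ht hp.
by apply: eq_exist; congr pair; apply: funext.
Qed.

Lemma tau_ge0 (x : EP P) j : 0 <= tau j x.
Proof. by have [t01 _ _] := svalP x; case/andP: (t01 j). Qed.

Lemma exists_tau_gt0 (x : EP P) : exists i, 0 < tau i x.
Proof.
apply: contrapT => /forallNP tau_le0.
have tau0 j : tau j x = 0 by apply/eqP; rewrite eq_le tau_ge0 leNgt andbT; apply/negP.
case: (svalP x) => _ [n [_ sum1]] _; move: sum1.
by rewrite big1 => [/esym/eqP|j _]; [rewrite oner_eq0 | exact: tau0].
Qed.

Lemma open_EP_subbase (S : set (EP P)) : EP_subbase S -> open S.
Proof.
move=> subS; exists [set S]; last by rewrite bigcup_set1.
move=> _ ->; exists [fset S]%fset; last by rewrite bigcap_fset big_seq_fset1.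
by move=> s; rewrite inE => /eqP ->; apply/mem_set.
Qed.

Lemma open_tau_preimage i (U : set Rdefinitions.R) : open U -> open (tau (P:=P) i @^-1` U).
Proof. by move=> oU; apply: open_EP_subbase; left; exists i, U. Qed.

Lemma open_tau_gam_preimage i (V : set P) : open V ->
  open [set x : EP P | 0 < tau i x /\ V (gam i x)].
Proof. by move=> oV; apply: open_EP_subbase; right; exists i, V. Qed.

Lemma tau_continuous i : continuous (tau (P:=P) i).
Proof. by apply/continuousP => U; exact: open_tau_preimage. Qed.

Lemma gam_continuous_at i (x : EP P) : 0 < tau i x -> {for x, continuous (gam i)}.
Proof.
move=> tix A; rewrite nbhsE => -[V [oV Vx] VA].
apply: (@filterS _ _ _ [set y | 0 < tau i y /\ V (gam i y)]); first by move=> y [_ /VA].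
by apply: open_nbhs_nbhs; split; [exact: open_tau_gam_preimage|].
Qed.

Lemma EP_cvg (Z : Type) (F : set_system Z) {FF : Filter F} (g : Z -> EP P) (y : EP P) :
  (forall i, tau i \o g @ F --> tau i y) ->
  (forall i, 0 < tau i y -> gam i \o g @ F --> gam i y) ->
  g @ F --> y.
Proof.
move=> tau_cvg gam_cvg A /=; rewrite nbhsE => -[_ [[B subB <-] [C BC Cy] BA]].
apply: filterS BA _; apply: (@filterS _ _ _ (g @^-1` C)); first by move=> z Cz; exists C.
have /subB [D subD DC] := BC; rewrite -DC; apply: filter_bigI => S DS.
have := Cy; rewrite -DC => /(_ _ DS) Sy.
move: Sy; have /subD/set_mem := DS => -[[i [U [oU ->]]]|[i [V [oV ->]]]] /= Sy.
  by apply: (tau_cvg i); exact: open_nbhs_nbhs.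
case: Sy => tiy Vy; apply: filterI.
  by apply: (tau_cvg i [set r | 0 < r]); apply: open_nbhs_nbhs; split => //; exact: open_gt.
by apply: (gam_cvg i tiy); exact: open_nbhs_nbhs.
Qed.

End EPTheory.
Arguments tau_continuous {P} i.

Section Orbits.
Context {P : TopGroup}.
Local Notation mul := (@tg_mul P).
Local Notation inv := (@tg_inv P).
Local Notation one := (@tg_one P).

Lemma orbit_refl (x : EP P) : Defs.orbit x x.
Proof. by exists one => j; split => // _; rewrite tg_mulg1. Qed.

Lemma orbit_sym (x y : EP P) : Defs.orbit x y -> Defs.orbit y x.
Proof.
case=> g xy; exists (inv g) => j; have [-> gam_y] := xy j.
by split => // tjx; rewrite gam_y // tg_mulgK.
Qed.

Lemma orbit_trans (x y z : EP P) : Defs.orbit x y -> Defs.orbit y z -> Defs.orbit x z.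
Proof.
case=> g xy [h yz]; exists (mul g h) => j; have [tyx gam_y] := xy j.
have [tzy gam_z] := yz j; split; first by rewrite tzy.
by move=> tjx; rewrite gam_z ?tyx // gam_y // tg_mulA.
Qed.

Lemma BPprojP (x y : EP P) : BPproj x = BPproj y <-> Defs.orbit x y.
Proof.
split=> [/(congr1 sval) /= ->|xy]; first exact: orbit_refl.
apply: eq_exist; apply/funext => z; apply/propext; split.
  exact: orbit_trans (orbit_sym xy).
exact: orbit_trans xy.
Qed.

Lemma BPrepK (b : BP P) : BPproj (BPrep b) = b.
Proof.
rewrite /BPrep; case: (cid (svalP b)) => r /= br.
by case: b br => S pS /= br; exact: eq_exist.
Qed.

Lemma orbit_BPrep (x : EP P) : Defs.orbit x (BPrep (BPproj x)).
Proof. by apply/orbit_sym/BPprojP; rewrite BPrepK. Qed.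

Lemma tau_BPrep j (x : EP P) : tau j (BPrep (BPproj x)) = tau j x.
Proof. by have [g xr] := orbit_BPrep x; case: (xr j). Qed.

Lemma BPproj_continuous : continuous (@BPproj P).
Proof. by apply/continuousP. Qed.

Lemma BP_continuous_at (Y : topologicalType) (D : set (BP P)) (f : BP P -> Y) b :
  open D -> D b -> (forall y, D (BPproj y) -> {for y, continuous (f \o @BPproj P)}) ->
  {for b, continuous f}.
Proof.
move=> oD Db fproj_cont A; rewrite nbhsE => -[W [oW Wfb] WA].
apply: (@filterS _ _ _ (D `&` f @^-1` W)); first by move=> b' [_ /WA].
apply: open_nbhs_nbhs; split => //.
change (open (@BPproj P @^-1` (D `&` f @^-1` W))); rewrite openE => y [Dy Wfy].
apply: filterI; first by have : open (@BPproj P @^-1` D) := oD; rewrite openE; apply.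
by apply: fproj_cont => //; exact: open_nbhs_nbhs.
Qed.

Lemma tau_BPrep_continuous i : continuous (fun b : BP P => tau i (BPrep b)).
Proof.
move=> b; apply: (BP_continuous_at openT) => // y _.
by rewrite /comp (funext (@tau_BPrep i)); exact: tau_continuous.
Qed.

End Orbits.
Arguments tau_BPrep_continuous {P} i.

Section RightAction.
Context {P : TopGroup}.
Local Notation mul := (@tg_mul P).
Local Notation inv := (@tg_inv P).
Local Notation one := (@tg_one P).

Lemma EPact_cond (x : EP P) (g : P) :
  EPcond (fun j => tau j x, fun j => if tau j x == 0 then one else mul (gam j x) g).
Proof. by have [t01 sum1 _] := svalP x; split => // j /= ->; rewrite eqxx. Qed.

Definition EPact (x : EP P) (g : P) : EP P := exist _ _ (EPact_cond x g).

Lemma gam_EPact (x : EP P) g j : tau j x != 0 -> gam j (EPact x g) = mul (gam j x) g.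
Proof. by rewrite /gam /= => /negbTE ->. Qed.

Lemma orbit_EPact (x : EP P) g : Defs.orbit x (EPact x g).
Proof. by exists g => j; split => // /eqP; exact: gam_EPact. Qed.

(* Normalises the i-th group coordinate to the unit; composed with [BPrep] it is
   a continuous section of [BPproj] over [0 < tau i]. *)
Definition EPnormal i (x : EP P) : EP P := EPact x (inv (gam i x)).

Lemma EPnormal_orbit i (x y : EP P) : Defs.orbit x y -> 0 < tau i x ->
  EPnormal i y = EPnormal i x.
Proof.
case=> g xy tix; have [_ gam_iy] := xy i.
apply: EP_ext => j; first by have [] := xy j.
have [tjy gam_jy] := xy j; rewrite /gam /= tjy; case: eqP => // tjx.
have tix0 : tau i x <> 0 by apply/eqP; rewrite gt_eqF.
by rewrite -!/(gam _ _) gam_jy // gam_iy // tg_invgM tg_mulA tg_mulgK.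
Qed.

Lemma EPnormal_continuous_at i (x : EP P) : 0 < tau i x ->
  {for x, continuous (EPnormal i)}.
Proof.
move=> tix; apply: (@EP_cvg P _ (nbhs x)) => j; first by move=> A /(tau_continuous j x).
move=> tjx; have near_gam :
    \forall z \near x, mul (gam j z) (inv (gam i z)) = gam j (EPnormal i z).
  near=> z; rewrite gam_EPact // gt_eqF //.
  by near: z; exact: cvgr_gt (tau_continuous j x) _ tjx.
have prod_cvg : mul (gam j z) (inv (gam i z)) @[z --> x] --> mul (gam j x) (inv (gam i x)).
  apply: continuous2_cvg; first exact: nbhs_filter.
  - exact: (@tg_mul_cont P (_, _)).
  - exact: gam_continuous_at.
  - exact: continuous_comp (gam_continuous_at tix) (@tg_inv_cont P _).
apply: cvg_trans (near_eq_cvg near_gam) _.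
by rewrite /= gam_EPact ?gt_eqF.
Unshelve. all: by end_near.
Qed.

Lemma BPproj_EPnormal i (b : BP P) : BPproj (EPnormal i (BPrep b)) = b.
Proof. by rewrite -[RHS]BPrepK; apply/BPprojP/orbit_sym/orbit_EPact. Qed.

Lemma EPnormal_BPrep_continuous_at i (b : BP P) : 0 < tau i (BPrep b) ->
  {for b, continuous (fun b => EPnormal i (BPrep b))}.
Proof.
move=> tib.
apply: (@BP_continuous_at _ _ ((fun b' => tau i (BPrep b')) @^-1` [set r | 0 < r])).
- by move/continuousP: (@tau_BPrep_continuous P i); apply; exact: open_gt.
- exact: tib.
move=> y /=; rewrite tau_BPrep => tiy.
have near_eq : \forall z \near y, EPnormal i z = EPnormal i (BPrep (BPproj z)).
  near=> z; apply/esym/EPnormal_orbit; first exact: orbit_BPrep.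
  by near: z; exact: cvgr_gt (tau_continuous i y) _ tiy.
apply: cvg_trans (near_eq_cvg near_eq) _.
by rewrite /= (EPnormal_orbit (orbit_BPrep y) tiy); exact: EPnormal_continuous_at.
Unshelve. all: by end_near.
Qed.

Lemma compact_BP_local_lift (K : set (BP P)) (b : BP P) : compact K -> K b ->
  exists2 U, nbhs b U &
    exists S : set (EP P), [/\ compact S, @BPproj P @` S `<=` K & K `&` U `<=` @BPproj P @` S].
Proof.
move=> cK Kb; have [i tib] := exists_tau_gt0 (BPrep b).
set t := tau i (BPrep b) in tib.
pose Kt := K `&` (fun b' => tau i (BPrep b')) @^-1` [set r | t / 2 <= r].
have cKt : compact Kt.
  apply: compact_closedI cK _; apply: preimage_closed; last exact: closed_ge.
  by move=> b' _; exact: tau_BPrep_continuous.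
have Kt_tau b' : Kt b' -> 0 < tau i (BPrep b').
  by case=> _ /= t2b'; apply: lt_le_trans t2b'; rewrite divr_gt0.
exists [set b' | t / 2 < tau i (BPrep b')].
  by apply: cvgr_gt (tau_BPrep_continuous i b) _ _; rewrite ltr_pdivrMr // ltr_pMr ?ltr1n.
exists ((fun b' => EPnormal i (BPrep b')) @` Kt); split.
- apply: continuous_compact cKt; apply: continuous_in_subspaceT => b' /set_mem.
  by move=> /Kt_tau; exact: EPnormal_BPrep_continuous_at.
- by move=> _ [_ [b' [Kb' _] <-] <-]; rewrite BPproj_EPnormal.
- move=> b' [Kb' t2b']; exists (EPnormal i (BPrep b')); last exact: BPproj_EPnormal.
  by exists b' => //; split => //; exact: ltW.
Qed.

End RightAction.

Section InducedMaps.
Context {F G : TopGroup}.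
Variable phi : F -> G.
Hypothesis phi_hom : is_hom phi.
Hypothesis phi_cont : continuous phi.

Lemma gam_Emap (x : EP F) j : tau j x != 0 -> gam j (Emap phi x) = phi (gam j x).
Proof. by rewrite /gam /= => /negbTE ->. Qed.

Lemma Emap_orbit (x y : EP F) : Defs.orbit x y -> Defs.orbit (Emap phi x) (Emap phi y).
Proof.
case=> g xy; exists (phi g) => j; have [tyx gam_y] := xy j; split => //=.
by rewrite /gam /= tyx; case: eqP => // tjx; rewrite gam_y // phi_hom.
Qed.

Lemma Bmap_BPproj (x : EP F) : Bmap phi (BPproj x) = BPproj (Emap phi x).
Proof. by apply/BPprojP/orbit_sym/Emap_orbit/orbit_BPrep. Qed.

Lemma Emap_base : Emap phi (EPbase F) = EPbase G.
Proof. by apply: EP_ext => // j; rewrite /gam /=; case: ifP; rewrite ?hom1. Qed.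

Lemma Bmap_base : Bmap phi (BPbase F) = BPbase G.
Proof. by rewrite /BPbase Bmap_BPproj Emap_base. Qed.

Lemma Emap_continuous : continuous (Emap phi).
Proof.
move=> x; apply: (@EP_cvg G _ (nbhs x)) => j; first by move=> A /(tau_continuous j x).
move=> /= tjx; have {}tjx : 0 < tau j x by [].
have near_gam : \forall z \near x, phi (gam j z) = gam j (Emap phi z).
  near=> z; rewrite gam_Emap // gt_eqF //.
  by near: z; exact: cvgr_gt (tau_continuous j x) _ tjx.
have phi_gam_cvg : phi (gam j z) @[z --> x] --> phi (gam j x).
  exact: continuous_comp (gam_continuous_at tjx) (@phi_cont _).
apply: cvg_trans (near_eq_cvg near_gam) _.
by rewrite /= gam_Emap ?gt_eqF.
Unshelve. all: by end_near.
Qed.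

Lemma Bmap_continuous : continuous (Bmap phi).
Proof.
move=> b; apply: (BP_continuous_at openT) => // y _.
have -> : Bmap phi \o @BPproj F = @BPproj G \o Emap phi.
  by apply/funext => z; exact: Bmap_BPproj.
by apply: continuous_comp; [exact: Emap_continuous | exact: BPproj_continuous].
Qed.

End InducedMaps.

Lemma cvg_eval_within_compact {X Y : topologicalType} (C : set X) (c : X)
    (f : {compact-open, X -> Y}) :
  hausdorff_space X -> compact C -> C c -> {for c, continuous (f : X -> Y)} ->
  (fun z : X * {compact-open, X -> Y} => z.2 z.1)
    @ filter_prod (within C (nbhs c)) (nbhs f) --> f c.
Proof.
move=> hX cC Cc fc V; rewrite nbhsE => -[W [oW Wfc] WV].
have nbhsCE : nbhs (c : subspace C) = within C (nbhs c) by rewrite nbhs_subspace_in.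
have cCs : compact (C : set (subspace C)).
  by move: cC; rewrite -[C]setIid => /compact_subspaceIP; rewrite setIid.
have nC : nbhs (c : subspace C) C by rewrite nbhsCE; exact: withinT.
have nfW : nbhs (c : subspace C) (f @^-1` W).
  by rewrite nbhsCE; apply: (cvg_within (F := nbhs c)); apply: fc; exact: open_nbhs_nbhs.
(* C is compact Hausdorff, hence regular: c has a neighbourhood R in C whose
   closure L in C is compact and mapped into W by f. *)
have [R nR clRW] := compact_regular (@subspace_hausdorff _ C hX) cCs nC nfW.
pose L := @closure (subspace C) R `&` C.
have cL : @compact X L.
  apply/compact_subspaceIP; rewrite setIC.
  exact: compact_closedI cCs (@closed_closure (subspace C) R).
exists (R `&` C, [set g : {compact-open, X -> Y} | g @` L `<=` W]).
  split; first by rewrite /= -nbhsCE; exact: filterI nR nC.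
  apply: open_nbhs_nbhs; split; first exact: compact_open_open.
  by move=> _ [c' [clRc' _] <-]; exact: clRW.
case=> c' g /= [[Rc' Cc'] gLW]; apply: WV; apply: gLW.
by exists c' => //; split => //; exact: subset_closure.
Qed.

Section CompactOpenContinuity.
Context {F G : TopGroup}.
Hypothesis hF : hausdorff_space F.

Lemma Emap_cvg_within_compact (K : set (EP F)) (x : EP F) (phi : {compact-open, F -> G}) :
  continuous (phi : F -> G) -> compact K -> K x ->
  (fun z : EP F * {compact-open, F -> G} => Emap z.2 z.1)
    @ filter_prod (within K (nbhs x)) (nbhs phi) --> Emap phi x.
Proof.
move=> phi_cont cK Kx.
apply: (@EP_cvg G _ (filter_prod (within K (nbhs x)) (nbhs phi))) => i.
  exact: cvg_comp (cvg_trans cvg_fst (cvg_within K)) (tau_continuous i x).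
move=> tix; have {}tix : 0 < tau i x by []; set t := tau i x in tix.
pose K' := K `&` tau i @^-1` [set r | t / 2 <= r].
have cK' : compact K'.
  apply: compact_closedI cK _; apply: preimage_closed; last exact: closed_ge.
  by move=> y _; exact: tau_continuous.
have K'_tau y : K' y -> 0 < tau i y.
  by case=> _ /= t2y; apply: lt_le_trans t2y; rewrite divr_gt0.
pose C := gam i @` K'.
have cC : compact C.
  apply: continuous_compact cK'; apply: continuous_in_subspaceT => y /set_mem.
  by move=> /K'_tau; exact: gam_continuous_at.
have Cx : C (gam i x).
  by exists x => //; split => //=; rewrite ler_pdivrMr // ler_peMr ?ler1n // ltW.
move=> V; rewrite /= gam_Emap ?gt_eqF //.
move=> /(cvg_eval_within_compact hF cC Cx (@phi_cont _)) [[A B] /= [CA nB] ABV].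
exists ([set x' | t / 2 < tau i x' /\ (C (gam i x') -> A (gam i x'))] `&` K, B) => /=.
  split => //; apply: filterI; last exact: withinT.
  apply: (cvg_within (F := nbhs x)); apply: filterI.
    by apply: cvgr_gt (tau_continuous i x) _ _; rewrite ltr_pdivrMr // ltr_pMr ?ltr1n.
  exact: gam_continuous_at tix _ CA.
case=> x' psi /= [[[t2x' CAx'] Kx'] Bpsi].
have K'x' : K' x' by split => //; exact: ltW.
rewrite gam_Emap ?gt_eqF ?K'_tau //.
by apply: (ABV (gam i x', psi)); split => //; apply: CAx'; exists x'.
Qed.

Lemma Emap_compact_open (phi : {compact-open, F -> G}) (K : set (EP F)) (O : set (EP G)) :
  continuous (phi : F -> G) -> compact K -> open O -> Emap phi @` K `<=` O ->
  nbhs phi [set psi : {compact-open, F -> G} | Emap psi @` K `<=` O].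
Proof.
move=> phi_cont cK oO KO.
have /compact_near_coveringP/near_covering_withinP cover := cK.
have : \forall psi \near phi, K `<=` (fun x => O (Emap psi x)).
  apply: (cover _ _ _ (nbhs_filter phi)) => x Kx.
  have /(Emap_cvg_within_compact phi_cont cK Kx) [[A B] /= [KA nB] ABO] :
      nbhs (Emap phi x) O.
    by apply: open_nbhs_nbhs; split => //; apply: KO; exists x.
  exists ([set x' | K x' -> A x'], B) => // -[x' psi] /= [KAx' Bpsi] Kx'.
  exact: (ABO (x', psi) (conj (KAx' Kx') Bpsi)).
by apply: filterS => psi KO' _ [x Kx <-]; exact: KO'.
Qed.

Lemma Bmap_compact_open (phi : {compact-open, F -> G}) (K : set (BP F)) (O : set (BP G)) :
  contHom phi -> compact K -> open O -> Bmap phi @` K `<=` O ->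
  within (@contHom F G) (nbhs phi) [set psi | Bmap psi @` K `<=` O].
Proof.
move=> [phi_cont phi_hom] cK oO KO.
have /compact_near_coveringP/near_covering_withinP cover := cK.
have : \forall psi \near within (@contHom F G) (nbhs phi), K `<=` (fun b => O (Bmap psi b)).
  apply: (cover _ _ _ (within_filter _ (nbhs_filter phi))) => b Kb.
  have [U nU [S [cS SK KUS]]] := compact_BP_local_lift cK Kb.
  have SO : Emap phi @` S `<=` @BPproj G @^-1` O.
    move=> _ [s Ss <-] /=; rewrite -Bmap_BPproj //.
    by apply: KO; exists (BPproj s) => //; apply: SK; exists s.
  have nW := Emap_compact_open phi_cont cS oO SO.
  exists (U, [set psi | contHom psi /\ Emap psi @` S `<=` @BPproj G @^-1` O]).
    by split => //; apply: filterS nW => psi Wpsi psiH; split.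
  case=> b' psi /= [Ub' [[_ psi_hom] Wpsi]] Kb'.
  have [s Ss <-] := KUS b' (conj Kb' Ub').
  by rewrite Bmap_BPproj //; apply: Wpsi; exists s.
by apply: filterS => psi KO' _ [b Kb <-]; exact: KO'.
Qed.

End CompactOpenContinuity.

Lemma continuous_within_compact_open {X Z W : topologicalType} (A : set X)
    (M : X -> {compact-open, Z -> W}) :
  (forall f, A f -> forall K O, compact K -> open O -> M f @` K `<=` O ->
     within A (nbhs f) [set g | M g @` K `<=` O]) ->
  {within A, continuous M}.
Proof.
move=> MKO; rewrite continuous_subspace_in => f /set_mem Af.
have nbhsAE : nbhs (f : subspace A) = within A (nbhs f) by rewrite nbhs_subspace_in.
by apply/compact_open_cvgP => K O cK oO fKO; rewrite nbhsAE; exact: MKO.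
Qed.

Theorem mainTheorem17 (F G : TopGroup) (hF : hausdorff_space F) :
  [/\ forall phi, @contHom F G phi ->
        pointed_cont_map (EPbase F) (EPbase G) (Emap phi : {compact-open, EP F -> EP G}),
      forall phi, @contHom F G phi ->
        pointed_cont_map (BPbase F) (BPbase G) (Bmap phi : {compact-open, BP F -> BP G}),
      {within @contHom F G,
        continuous (fun phi : {compact-open, F -> G} =>
                      (Emap phi : {compact-open, EP F -> EP G}))}
    & {within @contHom F G,
        continuous (fun phi : {compact-open, F -> G} =>
                      (Bmap phi : {compact-open, BP F -> BP G}))}].
Proof.
split.
- move=> phi [phi_cont phi_hom]; split; [exact: Emap_continuous | exact: Emap_base].
- move=> phi [phi_cont phi_hom]; split; [exact: Bmap_continuous | exact: Bmap_base].
- apply: continuous_within_compact_open => phi [phi_cont _] K O cK oO KO.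
  by apply: (cvg_within (F := nbhs phi)); exact: Emap_compact_open.
- apply: continuous_within_compact_open => phi phiH K O cK oO KO.
  exact: Bmap_compact_open.
Qed.
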